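(* Let $K:\ell^2\to\mathcal{H}$ be a bounded, linear and injective operator into a real Hilbert space $\mathcal{H}$, $f\in\mathcal{H}$, $w=(w_k)$ with $w_k\ge w_0>0$, and $\gamma>0$. For $u\in\ell^2$ let $\mathcal{A}=\{k: |u-\gamma K^*(Ku-f)|_k>\gamma w_k\}$, $\mathcal{I}=\mathbb{N}\setminus\mathcal{A}$, and $\mathcal{G}(u)=\begin{pmatrix}\gamma\mathcal{M}_{\mathcal{A}\mathcal{A}} & \gamma\mathcal{M}_{\mathcal{A}\mathcal{I}}\\ 0 & I_{\mathcal{I}}\end{pmatrix}$ (equivalently $\mathcal{G}(u)=(I-P_{\mathcal{A}})+\gamma P_{\mathcal{A}}K^*K$). Then $\mathcal{G}(u)$ is boundedly invertible from $\ell^2$ onto $\ell^2$, and $$\|\mathcal{G}(u)^{-1}\|\le\|\mathcal{M}_{\mathcal{A}\mathcal{A}}^{-1}\|\big(\tfrac1\gamma+\|\mathcal{M}_{\mathcal{A}\mathcal{I}}\|\big)+1.$$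
   Context: $K^*$ is the Hilbert space adjoint of $K$; $|x|_k$ means $|x_k|$. $P_{\mathcal{B}}$ denotes the coordinate projection onto the indices in $\mathcal{B}\subset\mathbb{N}$, and for index sets $\mathcal{B},\mathcal{C}$, $\mathcal{M}_{\mathcal{B}\mathcal{C}}=P_{\mathcal{B}}K^*K|_{\ell^2(\mathcal{C})}$, viewed as an operator from sequences supported on $\mathcal{C}$ to sequences supported on $\mathcal{B}$; $\mathcal{M}_{\mathcal{A}\mathcal{A}}^{-1}$ is the inverse of $\mathcal{M}_{\mathcal{A}\mathcal{A}}$ on the (finite-dimensional) space of sequences supported on $\mathcal{A}$. *)

From Stdlib Require Import Reals.
From Coquelicot Require Import Coquelicot.
Open Scope R_scope.

Definition seqR := nat -> R.

Definition l2 (u : seqR) : Prop := ex_series (fun k => (u k) ^ 2).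
Definition l2inner (u v : seqR) : R := Series (fun k => u k * v k).
Definition l2norm (u : seqR) : R := sqrt (Series (fun k => (u k) ^ 2)).

Definition seq_add (u v : seqR) : seqR := fun k => u k + v k.
Definition seq_scal (a : R) (u : seqR) : seqR := fun k => a * u k.

Definition is_inner_product (H : CompleteNormedModule R_AbsRing)
  (ip : H -> H -> R) : Prop :=
  (forall x y, ip x y = ip y x) /\
  (forall x y z, ip (plus x y) z = ip x z + ip y z) /\
  (forall (a : R) x y, ip (scal a x) y = a * ip x y) /\
  (forall x, norm x = sqrt (ip x x)).

Definition proj (B : nat -> bool) (x : seqR) : seqR :=
  fun k => if B k then x k else 0.

Definition supported_on (B : nat -> bool) (x : seqR) : Prop :=
  l2 x /\ forall k, B k = false -> x k = 0.

Definition opnorm (D : seqR -> Prop) (T : seqR -> seqR) : Rbar :=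
  Lub_Rbar (fun r => exists x, D x /\ l2norm x <= 1 /\ r = l2norm (T x)).

Definition active_set {H : CompleteNormedModule R_AbsRing}
  (K : seqR -> H) (Kadj : H -> seqR) (f : H) (w : seqR) (gamma : R)
  (u : seqR) : nat -> bool :=
  fun k => if Rlt_dec (gamma * w k)
                      (Rabs (u k - gamma * Kadj (minus (K u) f) k))
           then true else false.

Definition Gop {H : CompleteNormedModule R_AbsRing}
  (K : seqR -> H) (Kadj : H -> seqR) (A : nat -> bool) (gamma : R)
  (v : seqR) : seqR :=
  fun k => if A k then gamma * Kadj (K v) k else v k.

(** M_{BC} = P_B K^* K restricted to sequences supported on C (the
    restriction is expressed by the domain used in opnorm / inverses). *)
Definition Mop {H : CompleteNormedModule R_AbsRing}
  (K : seqR -> H) (Kadj : H -> seqR) (B : nat -> bool) (v : seqR) : seqR :=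
  proj B (Kadj (K v)).

(* The active set A is finite: u - gamma K^*(Ku - f) is square summable while
   the thresholds gamma w_k stay above gamma w_0 > 0.  On sequences supported
   on A, M_AA is injective because <x, M_AA x> = |K x|^2 and K is injective,
   and it is onto because the Gram matrix of K on finitely many coordinates
   can be eliminated one pivot at a time.  Its inverse is linear on a
   finite-dimensional space, hence bounded, and block back-substitution gives
   G(u)^{-1} v = M_AA^{-1} (v_A / gamma - M_AI v_I) + v_I, from which the
   estimate follows by the triangle inequality. *)

From Stdlib Require Import Reals.
From Coquelicot Require Import Coquelicot.
Open Scope R_scope.
From Stdlib Require Import Lra Lia Psatz FunctionalExtensionality ClassicalEpsilon List.

Definition seq0 : seqR := fun _ => 0.
Definition single (s : nat) (c : R) : seqR := fun n => if Nat.eq_dec n s then c else 0.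
Definition basis (s : nat) : seqR := single s 1.

Lemma sum_f_R0_single s c n : sum_f_R0 (single s c) n = if (n <? s)%nat then 0 else c.
Proof.
  induction n as [|n IH]; simpl.
  - unfold single; destruct (Nat.eq_dec 0 s), (Nat.ltb_spec 0 s); lra || lia.
  - rewrite IH; unfold single.
    destruct (Nat.eq_dec (S n) s), (Nat.ltb_spec n s), (Nat.ltb_spec (S n) s); lra || lia.
Qed.

Lemma is_series_single s c : is_series (single s c) c.
Proof.
  apply is_series_Reals; intros eps Heps; exists s; intros n Hn.
  rewrite sum_f_R0_single; destruct (Nat.ltb_spec n s); [lia|].
  unfold R_dist; rewrite Rminus_diag, Rabs_R0; lra.
Qed.

Lemma Series_single s c : Series (single s c) = c.
Proof. apply is_series_unique, is_series_single. Qed.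

Lemma Series_seq0 : Series seq0 = 0.
Proof.
  rewrite <- (Series_single 0 0); apply Series_ext; intro n; unfold seq0, single.
  now destruct Nat.eq_dec.
Qed.

Lemma Series_nonneg a : ex_series a -> (forall n, 0 <= a n) -> 0 <= Series a.
Proof.
  intros Ha Hpos; rewrite <- Series_seq0; apply Series_le; auto.
  intro n; unfold seq0; auto with real.
Qed.

Lemma Series_single_support a s : (forall n, n <> s -> a n = 0) -> Series a = a s.
Proof.
  intros Ha; rewrite <- (Series_single s (a s)); apply Series_ext; intro n; unfold single.
  destruct (Nat.eq_dec n s) as [->|Hn]; auto.
Qed.

Lemma l2_add x y : l2 x -> l2 y -> l2 (seq_add x y).
Proof.
  intros Hx Hy.
  apply (@ex_series_le R_AbsRing R_CompleteNormedModule _ (fun n => 2 * x n ^ 2 + 2 * y n ^ 2)).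
  - intro n; unfold seq_add; rewrite Rabs_pos_eq by apply pow2_ge_0.
    pose proof (pow2_ge_0 (x n - y n)); nra.
  - apply (@ex_series_plus R_AbsRing R_NormedModule);
      now apply (@ex_series_scal_l R_AbsRing R_NormedModule).
Qed.

Lemma l2_scal a x : l2 x -> l2 (seq_scal a x).
Proof.
  intros Hx; apply (@ex_series_ext R_AbsRing R_NormedModule (fun n => a ^ 2 * x n ^ 2)).
  - intro n; unfold seq_scal; simpl; ring.
  - now apply (@ex_series_scal_l R_AbsRing R_NormedModule).
Qed.

Lemma l2_proj B x : l2 x -> l2 (proj B x).
Proof.
  intros Hx; apply (@ex_series_le R_AbsRing R_CompleteNormedModule _ (fun n => x n ^ 2)); auto.
  intro n; unfold proj; destruct (B n); rewrite Rabs_pos_eq; nra.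
Qed.

Lemma l2_single s c : l2 (single s c).
Proof.
  apply (@ex_series_ext R_AbsRing R_NormedModule (single s (c ^ 2)));
    [|eexists; apply is_series_single].
  intro n; unfold single; simpl; destruct Nat.eq_dec; ring.
Qed.

Lemma l2_basis s : l2 (basis s).
Proof. apply l2_single. Qed.

Lemma l2_seq0 : l2 seq0.
Proof.
  apply (@ex_series_ext R_AbsRing R_NormedModule (single 0 0)); [|eexists; apply is_series_single].
  intro n; unfold single, seq0; simpl; destruct Nat.eq_dec; ring.
Qed.

Lemma ex_series_mul x y : l2 x -> l2 y -> ex_series (fun k => x k * y k).
Proof.
  intros Hx Hy.
  apply (@ex_series_le R_AbsRing R_CompleteNormedModule _ (fun n => / 2 * x n ^ 2 + / 2 * y n ^ 2)).
  - intro n; pose proof (pow2_ge_0 (x n - y n)); pose proof (pow2_ge_0 (x n + y n)).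
    apply Rabs_le; split; nra.
  - apply (@ex_series_plus R_AbsRing R_NormedModule);
      now apply (@ex_series_scal_l R_AbsRing R_NormedModule).
Qed.

Lemma l2inner_sym x y : l2inner x y = l2inner y x.
Proof. unfold l2inner; apply Series_ext; intro; ring. Qed.

Lemma l2inner_add_l x y z : l2 x -> l2 y -> l2 z ->
  l2inner (seq_add x y) z = l2inner x z + l2inner y z.
Proof.
  intros Hx Hy Hz; unfold l2inner, seq_add.
  rewrite <- Series_plus by now apply ex_series_mul.
  apply Series_ext; intro; ring.
Qed.

Lemma l2inner_scal_l a x z : l2inner (seq_scal a x) z = a * l2inner x z.
Proof. unfold l2inner, seq_scal; rewrite <- Series_scal_l; apply Series_ext; intro; ring. Qed.

Lemma l2inner_self_nonneg x : l2 x -> 0 <= l2inner x x.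
Proof. intros Hx; apply Series_nonneg; [now apply ex_series_mul|]; intro; nra. Qed.

Lemma l2inner_basis k v : l2inner (basis k) v = v k.
Proof.
  unfold l2inner; rewrite (Series_single_support _ k); unfold basis, single.
  - destruct Nat.eq_dec; [ring | congruence].
  - intros n Hn; destruct Nat.eq_dec; [congruence | ring].
Qed.

Lemma l2norm_nonneg x : 0 <= l2norm x.
Proof. apply sqrt_pos. Qed.

Lemma l2norm_sqrt_inner x : l2norm x = sqrt (l2inner x x).
Proof. unfold l2norm, l2inner; f_equal; apply Series_ext; intro; ring. Qed.

Lemma l2norm_seq0 : l2norm seq0 = 0.
Proof.
  unfold l2norm; rewrite (Series_ext _ seq0), Series_seq0 by (intro; unfold seq0; ring).
  apply sqrt_0.
Qed.

Lemma l2norm_scal a x : l2norm (seq_scal a x) = Rabs a * l2norm x.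
Proof.
  unfold l2norm, seq_scal.
  rewrite (Series_ext _ (fun n => a ^ 2 * x n ^ 2)), Series_scal_l by (intro; ring).
  destruct (Rle_dec 0 (Series (fun k => x k ^ 2))) as [Hpos|Hneg].
  - rewrite sqrt_mult, <- pow2_abs, sqrt_pow2 by (auto; nra || apply Rabs_pos); reflexivity.
  - rewrite !sqrt_neg_0 by (pose proof (pow2_ge_0 a); nra); ring.
Qed.

Lemma l2norm_proj_le B x : l2 x -> l2norm (proj B x) <= l2norm x.
Proof.
  intros Hx; apply sqrt_le_1_alt, Series_le; auto.
  intro n; unfold proj; destruct (B n); split; nra.
Qed.

Lemma abs_coord_le_l2norm x k : l2 x -> Rabs (x k) <= l2norm x.
Proof.
  intros Hx; rewrite <- sqrt_Rsqr_abs; apply sqrt_le_1_alt; unfold Rsqr.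
  replace (x k * x k) with (Series (single k (x k ^ 2))) by (rewrite Series_single; ring).
  apply Series_le; auto; intro n; unfold single; destruct Nat.eq_dec as [->|]; split; nra.
Qed.

Lemma l2norm_eq0 x : l2 x -> l2norm x = 0 -> x = seq0.
Proof.
  intros Hx H0; apply functional_extensionality; intro k; unfold seq0.
  pose proof (abs_coord_le_l2norm x k Hx); pose proof (Rabs_pos (x k)).
  apply Rabs_eq_0; lra.
Qed.

(* Cauchy-Schwarz from the nonnegativity of the quadratic [|x - t y|^2] in [t]. *)
Lemma le_sqrt_mult_of_quadratic a b c :
  (forall t, 0 <= a - 2 * t * b + t ^ 2 * c) -> 0 <= a -> 0 <= c -> b <= sqrt a * sqrt c.
Proof.
  intros Hq Ha Hc; rewrite <- sqrt_mult by auto.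
  assert (Hdiscr : b ^ 2 <= a * c).
  { destruct (Req_dec c 0) as [->|Hc0].
    - destruct (Req_dec b 0) as [->|Hb0]; [lra|].
      specialize (Hq ((a + 1) / (2 * b))).
      replace (a - 2 * ((a + 1) / (2 * b)) * b + ((a + 1) / (2 * b)) ^ 2 * 0) with (-1) in Hq
        by (field; auto); lra.
    - specialize (Hq (b / c)).
      replace (a - 2 * (b / c) * b + (b / c) ^ 2 * c) with ((a * c - b ^ 2) / c) in Hq
        by (field; auto).
      apply Rmult_le_compat_r with (r := c) in Hq; [|lra].
      unfold Rdiv in Hq; rewrite Rmult_assoc, Rinv_l in Hq by auto; lra. }
  apply Rle_trans with (Rabs b); [apply Rle_abs|].
  rewrite <- sqrt_Rsqr_abs; apply sqrt_le_1_alt; unfold Rsqr; lra.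
Qed.

Lemma l2_cauchy_schwarz x y : l2 x -> l2 y -> l2inner x y <= l2norm x * l2norm y.
Proof.
  intros Hx Hy; rewrite !l2norm_sqrt_inner.
  apply le_sqrt_mult_of_quadratic; try now apply l2inner_self_nonneg.
  intro t; set (z := seq_add x (seq_scal (- t) y)).
  assert (Hz : l2 z) by (apply l2_add, l2_scal; auto).
  replace (l2inner x x - 2 * t * l2inner x y + t ^ 2 * l2inner y y) with (l2inner z z).
  { now apply l2inner_self_nonneg. }
  unfold z at 1; rewrite l2inner_add_l, l2inner_scal_l, (l2inner_sym x), (l2inner_sym y)
    by (auto using l2_scal).
  unfold z; rewrite !l2inner_add_l, !l2inner_scal_l, (l2inner_sym y x) by (auto using l2_scal).
  ring.
Qed.

Lemma l2norm_sqr x : l2 x -> l2norm x ^ 2 = l2inner x x.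
Proof. intros Hx; rewrite l2norm_sqrt_inner, pow2_sqrt; auto using l2inner_self_nonneg. Qed.

Lemma l2norm_triangle x y : l2 x -> l2 y -> l2norm (seq_add x y) <= l2norm x + l2norm y.
Proof.
  intros Hx Hy.
  pose proof (l2_cauchy_schwarz x y Hx Hy).
  pose proof (l2norm_nonneg x); pose proof (l2norm_nonneg y).
  rewrite l2norm_sqrt_inner, <- (sqrt_pow2 (l2norm x + l2norm y)) by lra.
  apply sqrt_le_1_alt.
  rewrite l2inner_add_l, (l2inner_sym x), (l2inner_sym y), !l2inner_add_l, (l2inner_sym y x)
    by (auto using l2_add).
  rewrite <- !l2norm_sqr by auto; nra.
Qed.

Lemma proj_split B v : v = seq_add (proj B v) (proj (fun k => negb (B k)) v).
Proof.
  apply functional_extensionality; intro k; unfold seq_add, proj.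
  destruct (B k); simpl; ring.
Qed.

Lemma supported_add B x y : supported_on B x -> supported_on B y -> supported_on B (seq_add x y).
Proof.
  intros [Hx Hx0] [Hy Hy0]; split; [now apply l2_add|].
  intros k Hk; unfold seq_add; rewrite Hx0, Hy0 by auto; ring.
Qed.

Lemma supported_scal B a x : supported_on B x -> supported_on B (seq_scal a x).
Proof.
  intros [Hx Hx0]; split; [now apply l2_scal|].
  intros k Hk; unfold seq_scal; rewrite Hx0 by auto; ring.
Qed.

Lemma supported_proj B x : l2 x -> supported_on B (proj B x).
Proof. intros Hx; split; [now apply l2_proj|]; intros k Hk; unfold proj; now rewrite Hk. Qed.

Lemma supported_seq0 B : supported_on B seq0.
Proof. split; [apply l2_seq0 | reflexivity]. Qed.

Lemma supported_basis B s : B s = true -> supported_on B (basis s).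
Proof.
  intros Hs; split; [apply l2_basis|].
  intros k Hk; unfold basis, single; destruct Nat.eq_dec; congruence.
Qed.

Definition inverts_on (B : nat -> bool) (T Tinv : seqR -> seqR) : Prop :=
  forall x, supported_on B x ->
    supported_on B (Tinv x) /\ T (Tinv x) = x /\ Tinv (T x) = x.

Section InverseOn.

Variables (B : nat -> bool) (T Tinv : seqR -> seqR).
Hypothesis T_plus : forall x y, supported_on B x -> supported_on B y ->
  T (seq_add x y) = seq_add (T x) (T y).
Hypothesis T_scal : forall a x, supported_on B x -> T (seq_scal a x) = seq_scal a (T x).
Hypothesis Tinv_inv : inverts_on B T Tinv.

Lemma inverse_plus x y : supported_on B x -> supported_on B y ->
  Tinv (seq_add x y) = seq_add (Tinv x) (Tinv y).
Proof.
  intros Hx Hy.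
  destruct (Tinv_inv x Hx) as [Sx [Ex _]]; destruct (Tinv_inv y Hy) as [Sy [Ey _]].
  rewrite <- Ex at 1; rewrite <- Ey at 1; rewrite <- T_plus by auto.
  now apply Tinv_inv, supported_add.
Qed.

Lemma inverse_scal a x : supported_on B x -> Tinv (seq_scal a x) = seq_scal a (Tinv x).
Proof.
  intros Hx; destruct (Tinv_inv x Hx) as [Sx [Ex _]].
  rewrite <- Ex at 1; rewrite <- T_scal by auto.
  now apply Tinv_inv, supported_scal.
Qed.

Lemma inverse_unique_on Tinv' x : inverts_on B T Tinv' -> supported_on B x -> Tinv' x = Tinv x.
Proof.
  intros Tinv'_inv Hx; destruct (Tinv_inv x Hx) as [Sx [Ex _]].
  rewrite <- Ex at 1; now apply Tinv'_inv.
Qed.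

End InverseOn.

(* Split off one basis vector at a time. *)
Lemma linear_bounded_on_list (B : nat -> bool) (T : seqR -> seqR) :
  (forall x, supported_on B x -> l2 (T x)) ->
  (forall x y, supported_on B x -> supported_on B y -> T (seq_add x y) = seq_add (T x) (T y)) ->
  (forall a x, supported_on B x -> T (seq_scal a x) = seq_scal a (T x)) ->
  forall L, (forall k, In k L -> B k = true) ->
  exists C, 0 <= C /\ forall x, supported_on B x -> (forall k, ~ In k L -> x k = 0) ->
    l2norm (T x) <= C * l2norm x.
Proof.
  intros T_l2 T_plus T_scal L; induction L as [|s L IH]; intros HL.
  - exists 0; split; [lra|]; intros x Hx Hx0.
    replace x with (seq_scal 0 x)
      by (apply functional_extensionality; intro k; unfold seq_scal; rewrite Hx0; auto; ring).
    rewrite T_scal, !l2norm_scal, Rabs_R0 by auto; lra.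
  - destruct IH as [C [HC HCb]]; [intros k Hk; apply HL; now right|].
    pose proof (l2norm_nonneg (T (basis s))).
    exists (C + l2norm (T (basis s))); split; [lra|]; intros x Hx Hx0.
    set (x' := proj (fun k => negb (k =? s)) x).
    assert (Hs : supported_on B (basis s)) by (apply supported_basis, HL; now left).
    assert (Hx' : supported_on B x').
    { split; [apply l2_proj, Hx|]; intros k Hk; unfold x', proj.
      rewrite (proj2 Hx k Hk); now destruct (negb _). }
    assert (Hsplit : x = seq_add x' (seq_scal (x s) (basis s))).
    { apply functional_extensionality; intro k; unfold x', proj, seq_add, seq_scal, basis, single.
      destruct (Nat.eq_dec k s) as [->|Hk]; [rewrite Nat.eqb_refl; simpl; ring|].
      apply Nat.eqb_neq in Hk; rewrite Hk; simpl; ring. }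
    assert (Hx'b : l2norm (T x') <= C * l2norm x).
    { apply Rle_trans with (C * l2norm x'); [apply HCb; auto|].
      - intros k Hk; unfold x', proj; destruct (Nat.eqb_spec k s); simpl; auto.
        apply Hx0; intros [E|E]; auto.
      - apply Rmult_le_compat_l, l2norm_proj_le, Hx; auto. }
    pose proof (abs_coord_le_l2norm x s (proj1 Hx)).
    rewrite Hsplit at 1; rewrite T_plus, T_scal by (auto using supported_scal).
    eapply Rle_trans; [apply l2norm_triangle; auto using l2_scal|].
    rewrite l2norm_scal.
    assert (Rabs (x s) * l2norm (T (basis s)) <= l2norm x * l2norm (T (basis s)))
      by (apply Rmult_le_compat_r; auto).
    lra.
Qed.

Lemma opnorm_ge D T x : D x -> l2norm x <= 1 -> Rbar_le (l2norm (T x)) (opnorm D T).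
Proof. intros Hx Hx1; apply Lub_Rbar_correct; now exists x. Qed.

Lemma opnorm_le D T c : 0 <= c -> (forall x, D x -> l2norm (T x) <= c * l2norm x) ->
  Rbar_le (opnorm D T) c.
Proof.
  intros Hc HT; apply Lub_Rbar_correct; intros r [x [Hx [Hx1 ->]]]; simpl.
  specialize (HT x Hx); nra.
Qed.

Lemma opnorm_ext D T T' : (forall x, D x -> T x = T' x) -> opnorm D T = opnorm D T'.
Proof.
  intros E; apply Lub_Rbar_eqset; intro r; split; intros [x [Hx [Hx1 ->]]];
    exists x; rewrite ?E by auto; auto.
Qed.

Lemma bound_of_unit_ball_bound D T r :
  (forall x, D x -> l2 x) -> (forall a x, D x -> D (seq_scal a x)) ->
  (forall a x, D x -> T (seq_scal a x) = seq_scal a (T x)) ->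
  (forall x, D x -> l2norm x <= 1 -> l2norm (T x) <= r) ->
  forall x, D x -> l2norm (T x) <= r * l2norm x.
Proof.
  intros D_l2 D_scal T_scal Hr x Hx; pose proof (l2norm_nonneg x).
  destruct (Req_dec (l2norm x) 0) as [Hx0|Hx0].
  - replace x with (seq_scal 0 x)
      by (rewrite (l2norm_eq0 x) by auto; apply functional_extensionality; intro;
          unfold seq_scal, seq0; ring).
    rewrite T_scal, !l2norm_scal, Rabs_R0 by auto; lra.
  - assert (Hinv : 0 < / l2norm x) by (apply Rinv_0_lt_compat; lra).
    specialize (Hr (seq_scal (/ l2norm x) x) (D_scal _ _ Hx)).
    rewrite T_scal, !l2norm_scal, Rabs_pos_eq, Rinv_l in Hr by (auto; lra).
    specialize (Hr (Rle_refl 1)).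
    apply Rmult_le_compat_l with (r := l2norm x) in Hr; [|lra].
    rewrite <- Rmult_assoc, Rinv_r, Rmult_1_l in Hr by lra; lra.
Qed.

Lemma opnorm_finite D T c :
  (forall x, D x -> l2 x) -> (forall a x, D x -> D (seq_scal a x)) -> D seq0 ->
  (forall a x, D x -> T (seq_scal a x) = seq_scal a (T x)) ->
  0 <= c -> (forall x, D x -> l2norm (T x) <= c * l2norm x) ->
  exists r, opnorm D T = Finite r /\ 0 <= r /\ forall x, D x -> l2norm (T x) <= r * l2norm x.
Proof.
  intros D_l2 D_scal D0 T_scal Hc HT.
  pose proof (opnorm_le D T c Hc HT) as Hle.
  assert (Hge : forall x, D x -> l2norm x <= 1 -> Rbar_le (l2norm (T x)) (opnorm D T))
    by (intros; now apply opnorm_ge).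
  pose proof (Hge seq0 D0 ltac:(rewrite l2norm_seq0; lra)) as H0.
  destruct (opnorm D T) as [r| |]; simpl in Hle, H0; try contradiction.
  exists r; repeat split.
  - pose proof (l2norm_nonneg (T seq0)); lra.
  - apply bound_of_unit_ball_bound; auto; intros x Hx Hx1; exact (Hge x Hx Hx1).
Qed.

Lemma l2_eventually_small s c : l2 s -> 0 < c -> exists N, forall k, (N <= k)%nat -> Rabs (s k) < c.
Proof.
  intros Hs Hc.
  apply ex_series_lim_0, is_lim_seq_spec in Hs.
  assert (Hc2 : 0 < c ^ 2) by nra.
  destruct (Hs (mkposreal _ Hc2)) as [N HN]; exists N; intros k Hk.
  specialize (HN k Hk); cbn [pos] in HN.
  rewrite Rminus_0_r, Rabs_pos_eq, <- pow2_abs in HN by apply pow2_ge_0.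
  pose proof (Rabs_pos (s k)); nra.
Qed.

Lemma eventually_false_listed (B : nat -> bool) N : (forall k, (N <= k)%nat -> B k = false) ->
  exists S, forall k, In k S <-> B k = true.
Proof.
  intros HB; exists (filter B (seq 0 N)); intro k; rewrite filter_In, in_seq.
  split; [tauto|]; intros Hk; repeat split; auto.
  - lia.
  - destruct (Nat.lt_ge_cases k N); [lia|]; rewrite HB in Hk by auto; discriminate.
Qed.

Section InnerProductSpace.

Context {H : CompleteNormedModule R_AbsRing} (ip : H -> H -> R).
Hypothesis Hip : is_inner_product H ip.

Lemma ip_plus_r x y z : ip x (plus y z) = ip x y + ip x z.
Proof. destruct Hip as [Hsym [Hplus _]]; now rewrite Hsym, Hplus, (Hsym y), (Hsym z). Qed.

Lemma ip_scal_r (a : R) x y : ip x (scal a y) = a * ip x y.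
Proof. destruct Hip as [Hsym [_ [Hscal _]]]; now rewrite Hsym, Hscal, (Hsym y). Qed.

Lemma ip_self_nonpos_zero x : ip x x <= 0 -> x = zero.
Proof.
  intros Hx; destruct Hip as [_ [_ [_ Hnorm]]].
  assert (Hx0 : norm x = 0) by (rewrite Hnorm; now apply sqrt_neg_0).
  exact (norm_eq_zero x Hx0).
Qed.

Lemma ip_self_nonneg x : 0 <= ip x x.
Proof.
  destruct (Rle_lt_dec (ip x x) 0) as [Hx|Hx]; [|lra].
  rewrite (ip_self_nonpos_zero x Hx); destruct Hip as [_ [_ [Hscal _]]].
  replace (ip zero zero) with (ip (scal (0 : R) (@zero H)) zero)
    by (f_equal; exact (scal_zero_l (@zero H))).
  rewrite Hscal; lra.
Qed.

Lemma ip_cauchy_schwarz x y : ip x y <= norm x * norm y.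
Proof.
  pose proof Hip as [Hsym [Hplus [Hscal Hnorm]]]; rewrite !Hnorm.
  apply le_sqrt_mult_of_quadratic; try apply ip_self_nonneg.
  intro t; rewrite <- (Rplus_0_r (ip x x)).
  replace (ip x x + 0 - 2 * t * ip x y + t ^ 2 * ip y y)
    with (ip (plus x (scal (- t) y)) (plus x (scal (- t) y))).
  { apply ip_self_nonneg. }
  rewrite Hplus, Hscal, !ip_plus_r, !ip_scal_r, (Hsym y x); ring.
Qed.

End InnerProductSpace.

Section Gram.

Context {H : CompleteNormedModule R_AbsRing} (ip : H -> H -> R) (K : seqR -> H) (Kadj : H -> seqR).
Hypothesis Hip : is_inner_product H ip.
Hypothesis K_plus : forall x y, l2 x -> l2 y -> K (seq_add x y) = plus (K x) (K y).
Hypothesis K_scal : forall (a : R) x, l2 x -> K (seq_scal a x) = scal a (K x).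
Hypothesis K_inj : forall x y, l2 x -> l2 y -> K x = K y -> x = y.
Hypothesis Kadj_l2 : forall y, l2 (Kadj y).
Hypothesis K_adjoint : forall x y, l2 x -> ip (K x) y = l2inner x (Kadj y).

Lemma Kadj_coord y k : Kadj y k = ip (K (basis k)) y.
Proof. rewrite K_adjoint by apply l2_basis; now rewrite l2inner_basis. Qed.

Lemma Kadj_plus y z : Kadj (plus y z) = seq_add (Kadj y) (Kadj z).
Proof.
  apply functional_extensionality; intro k; unfold seq_add.
  rewrite !Kadj_coord; now apply ip_plus_r.
Qed.

Lemma Kadj_scal (a : R) y : Kadj (scal a y) = seq_scal a (Kadj y).
Proof.
  apply functional_extensionality; intro k; unfold seq_scal.
  rewrite !Kadj_coord; now apply ip_scal_r.
Qed.

Lemma gram_plus x y : l2 x -> l2 y ->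
  Kadj (K (seq_add x y)) = seq_add (Kadj (K x)) (Kadj (K y)).
Proof. intros Hx Hy; rewrite K_plus by auto; apply Kadj_plus. Qed.

Lemma gram_scal a x : l2 x -> Kadj (K (seq_scal a x)) = seq_scal a (Kadj (K x)).
Proof. intros Hx; rewrite K_scal by auto; apply Kadj_scal. Qed.

Lemma K_eq_zero x : l2 x -> K x = zero -> x = seq0.
Proof.
  intros Hx Hx0; apply K_inj; auto using l2_seq0; rewrite Hx0.
  replace seq0 with (seq_scal 0 seq0)
    by (apply functional_extensionality; intro; unfold seq_scal, seq0; ring).
  rewrite K_scal by apply l2_seq0; symmetry; exact (scal_zero_l (K seq0)).
Qed.

Lemma gram_self_pos x : l2 x -> x <> seq0 -> 0 < l2inner x (Kadj (K x)).
Proof.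
  intros Hx Hx0; rewrite <- K_adjoint by auto.
  destruct (Rle_lt_dec (ip (K x) (K x)) 0) as [Hle|Hlt]; auto.
  exfalso; apply Hx0, K_eq_zero, (ip_self_nonpos_zero ip Hip); auto.
Qed.

Lemma Mop_plus B x y : l2 x -> l2 y ->
  Mop K Kadj B (seq_add x y) = seq_add (Mop K Kadj B x) (Mop K Kadj B y).
Proof.
  intros Hx Hy; unfold Mop; rewrite gram_plus by auto.
  apply functional_extensionality; intro k; unfold proj, seq_add; destruct (B k); ring.
Qed.

Lemma Mop_scal B a x : l2 x -> Mop K Kadj B (seq_scal a x) = seq_scal a (Mop K Kadj B x).
Proof.
  intros Hx; unfold Mop; rewrite gram_scal by auto.
  apply functional_extensionality; intro k; unfold proj, seq_scal; destruct (B k); ring.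
Qed.

Lemma Mop_supported B x : supported_on B (Mop K Kadj B x).
Proof. apply supported_proj, Kadj_l2. Qed.

(* [<q, K^*K q> = |K q|^2] and the summand vanishes both on and off [B]. *)
Lemma Mop_kernel B q : supported_on B q -> Mop K Kadj B q = seq0 -> q = seq0.
Proof.
  intros [Hq Hq0] HMq; apply K_eq_zero, (ip_self_nonpos_zero ip Hip); auto.
  rewrite K_adjoint by auto; unfold l2inner.
  rewrite (Series_ext _ seq0), Series_seq0; [lra|]; intro k; unfold seq0.
  destruct (B k) eqn:Bk.
  - apply (f_equal (fun s => s k)) in HMq; unfold Mop, proj, seq0 in HMq.
    rewrite Bk in HMq; rewrite HMq; ring.
  - rewrite Hq0 by auto; ring.
Qed.

Lemma Mop_injective B x y : supported_on B x -> supported_on B y ->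
  Mop K Kadj B x = Mop K Kadj B y -> x = y.
Proof.
  intros Hx Hy Exy; pose proof (proj1 Hx); pose proof (proj1 Hy).
  assert (Hd : seq_add x (seq_scal (-1) y) = seq0).
  { apply (Mop_kernel B); [apply supported_add, supported_scal; auto|].
    rewrite Mop_plus, Mop_scal, Exy by auto using l2_scal.
    apply functional_extensionality; intro k; unfold seq_add, seq_scal, seq0; ring. }
  apply functional_extensionality; intro k.
  apply (f_equal (fun s => s k)) in Hd; unfold seq_add, seq_scal, seq0 in Hd; lra.
Qed.

Definition solves_gram_on (L : list nat) (b x : seqR) : Prop :=
  l2 x /\ (forall k, ~ In k L -> x k = 0) /\ (forall k, In k L -> Kadj (K x) k = b k).

(* Gaussian elimination step: [q = e_s - z] with [K^*K z = K^*K e_s] on [L]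
   has [K^*K q = 0] on [L], so [(K^*K q)_s = <q, K^*K q> > 0] is a pivot. *)
Lemma gram_pivot L s : ~ In s L -> (forall b, exists x, solves_gram_on L b x) ->
  exists q, l2 q /\ (forall k, ~ In k (s :: L) -> q k = 0) /\
    (forall k, In k L -> Kadj (K q) k = 0) /\ 0 < Kadj (K q) s.
Proof.
  intros Hs Hsolve; destruct (Hsolve (Kadj (K (basis s)))) as [z [Hz [Hz0 HGz]]].
  set (q := seq_add (basis s) (seq_scal (-1) z)).
  assert (Hq : l2 q) by (apply l2_add; [apply l2_basis | now apply l2_scal]).
  assert (Hqs : q s = 1).
  { unfold q, seq_add, seq_scal, basis, single; rewrite Hz0 by auto.
    destruct Nat.eq_dec; [ring | congruence]. }
  assert (Hq0 : forall k, ~ In k (s :: L) -> q k = 0).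
  { intros k Hk; unfold q, seq_add, seq_scal, basis, single.
    rewrite Hz0 by (intro; apply Hk; now right).
    destruct Nat.eq_dec as [->|]; [exfalso; apply Hk; now left | ring]. }
  assert (HGq : forall k, In k L -> Kadj (K q) k = 0).
  { intros k Hk; unfold q; rewrite gram_plus, gram_scal by auto using l2_basis, l2_scal.
    unfold seq_add, seq_scal; rewrite HGz by auto; ring. }
  exists q; repeat split; auto.
  replace (Kadj (K q) s) with (l2inner q (Kadj (K q))).
  - apply gram_self_pos; auto; intros E; rewrite E in Hqs; unfold seq0 in Hqs; lra.
  - unfold l2inner; rewrite (Series_single_support _ s), Hqs; [ring|].
    intros k Hk; destruct (in_dec Nat.eq_dec k L) as [HkL|HkL].
    + rewrite HGq by auto; ring.
    + rewrite Hq0; [ring|]; intros [E|E]; auto.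
Qed.

Lemma gram_solvable L b : exists x, solves_gram_on L b x.
Proof.
  revert b; induction L as [|s L IH]; intros b.
  - exists seq0; repeat split; [apply l2_seq0 | intros k []].
  - destruct (IH b) as [y [Hy [Hy0 HGy]]].
    destruct (in_dec Nat.eq_dec s L) as [Hs|Hs].
    + exists y; repeat split; auto.
      * intros k Hk; apply Hy0; intro; apply Hk; now right.
      * intros k [<-|Hk]; auto.
    + destruct (gram_pivot L s Hs IH) as [q [Hq [Hq0 [HGq Hpiv]]]].
      exists (seq_add y (seq_scal ((b s - Kadj (K y) s) / Kadj (K q) s) q)); repeat split.
      * apply l2_add, l2_scal; auto.
      * intros k Hk; unfold seq_add, seq_scal.
        rewrite Hq0, Hy0 by (auto; intro; apply Hk; now right); ring.
      * intros k Hk; rewrite gram_plus, gram_scal by auto using l2_scal; unfold seq_add, seq_scal.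
        destruct (Nat.eq_dec k s) as [->|Hks]; [field; lra|].
        destruct Hk as [->|Hk]; [congruence|]; rewrite (HGq k), (HGy k) by auto; ring.
Qed.

Lemma Mop_inverse_exists B S : (forall k, In k S <-> B k = true) ->
  exists Minv, inverts_on B (Mop K Kadj B) Minv.
Proof.
  intros HS.
  assert (Hsurj : forall b, supported_on B b -> exists x, supported_on B x /\ Mop K Kadj B x = b).
  { intros b [Hb Hb0]; destruct (gram_solvable S b) as [x [Hx [Hx0 HGx]]].
    exists x; split; [split; auto|].
    - intros k Hk; apply Hx0; rewrite HS; congruence.
    - apply functional_extensionality; intro k; unfold Mop, proj; destruct (B k) eqn:Bk.
      + now apply HGx, HS.
      + symmetry; auto. }
  exists (fun b => epsilon (inhabits seq0) (fun x => supported_on B x /\ Mop K Kadj B x = b)).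
  intros b Hb; destruct (epsilon_spec (inhabits seq0) _ (Hsurj b Hb)) as [Sb Eb].
  split; [exact Sb|]; split; [exact Eb|].
  destruct (epsilon_spec (inhabits seq0) _ (Hsurj _ (Mop_supported B b))) as [Sb' Eb'].
  now apply (Mop_injective B).
Qed.

Variable CK : R.
Hypothesis K_bounded : forall x, l2 x -> norm (K x) <= CK * l2norm x.

Lemma Kadj_bounded y : l2norm (Kadj y) <= Rabs CK * norm y.
Proof.
  pose proof (Kadj_l2 y) as Hz.
  assert (Hsq : l2norm (Kadj y) ^ 2 <= Rabs CK * l2norm (Kadj y) * norm y).
  { rewrite l2norm_sqr, <- K_adjoint by auto.
    eapply Rle_trans; [apply (ip_cauchy_schwarz ip Hip)|].
    apply Rmult_le_compat_r; [apply norm_ge_0|].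
    eapply Rle_trans; [apply K_bounded; auto|].
    apply Rmult_le_compat_r; [apply l2norm_nonneg | apply Rle_abs]. }
  pose proof (l2norm_nonneg (Kadj y)); pose proof (norm_ge_0 y); pose proof (Rabs_pos CK).
  destruct (Req_dec (l2norm (Kadj y)) 0) as [->|Hnz]; [nra|].
  apply (Rmult_le_reg_l (l2norm (Kadj y))); nra.
Qed.

Lemma Mop_bounded B x : l2 x -> l2norm (Mop K Kadj B x) <= Rabs CK * Rabs CK * l2norm x.
Proof.
  intros Hx; unfold Mop; eapply Rle_trans; [apply l2norm_proj_le, Kadj_l2|].
  eapply Rle_trans; [apply Kadj_bounded|].
  rewrite Rmult_assoc; apply Rmult_le_compat_l; [apply Rabs_pos|].
  eapply Rle_trans; [apply K_bounded; auto|].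
  apply Rmult_le_compat_r; [apply l2norm_nonneg | apply Rle_abs].
Qed.

Lemma Mop_opnorm_finite B C : exists r, opnorm (supported_on C) (Mop K Kadj B) = Finite r /\
  0 <= r /\ forall x, supported_on C x -> l2norm (Mop K Kadj B x) <= r * l2norm x.
Proof.
  apply (opnorm_finite _ _ (Rabs CK * Rabs CK)).
  - now intros x [Hx _].
  - intros; now apply supported_scal.
  - apply supported_seq0.
  - intros a x [Hx _]; now apply Mop_scal.
  - pose proof (Rabs_pos CK); nra.
  - intros x [Hx _]; now apply Mop_bounded.
Qed.


Section BackSubstitution.

Variables (B : nat -> bool) (gamma : R) (Minv : seqR -> seqR).
Hypothesis gamma_pos : 0 < gamma.
Hypothesis Minv_inv : inverts_on B (Mop K Kadj B) Minv.

(* Block back-substitution for [G(u)]: [x_I = v_I] and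
   [M_AA x_A = v_A / gamma - M_AI v_I]. *)
Definition reduced_rhs (v : seqR) : seqR :=
  seq_add (seq_scal (/ gamma) (proj B v))
    (seq_scal (-1) (Mop K Kadj B (proj (fun k => negb (B k)) v))).

Definition Gop_inverse (v : seqR) : seqR :=
  seq_add (Minv (reduced_rhs v)) (proj (fun k => negb (B k)) v).

Lemma reduced_rhs_supported v : l2 v -> supported_on B (reduced_rhs v).
Proof.
  intros Hv; apply supported_add, supported_scal;
    [now apply supported_scal, supported_proj | apply Mop_supported].
Qed.

Lemma Gop_inverse_l2 v : l2 v -> l2 (Gop_inverse v).
Proof. intros Hv; apply l2_add; [apply Minv_inv, reduced_rhs_supported | apply l2_proj]; auto. Qed.

Lemma Gop_Gop_inverse v : l2 v -> Gop K Kadj B gamma (Gop_inverse v) = v.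
Proof.
  intros Hv; destruct (Minv_inv _ (reduced_rhs_supported v Hv)) as [[Sl Sz] [SM _]].
  apply functional_extensionality; intro k; unfold Gop, Gop_inverse.
  destruct (B k) eqn:Bk.
  - rewrite gram_plus by auto using l2_proj.
    apply (f_equal (fun s => s k)) in SM; unfold Mop, proj at 1 in SM; rewrite Bk in SM.
    unfold seq_add at 1; rewrite SM; unfold reduced_rhs, seq_add, seq_scal, Mop, proj.
    rewrite Bk; simpl; field; lra.
  - unfold seq_add, proj; rewrite Sz, Bk by auto; simpl; ring.
Qed.

Lemma Gop_inverse_Gop v : l2 v -> Gop_inverse (Gop K Kadj B gamma v) = v.
Proof.
  intros Hv.
  assert (HI : proj (fun k => negb (B k)) (Gop K Kadj B gamma v) = proj (fun k => negb (B k)) v).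
  { apply functional_extensionality; intro k; unfold proj, Gop; now destruct (B k). }
  assert (Hrhs : reduced_rhs (Gop K Kadj B gamma v) = Mop K Kadj B (proj B v)).
  { pose proof (f_equal (fun s => Kadj (K s)) (proj_split B v)) as Hsplit; cbv beta in Hsplit.
    rewrite gram_plus in Hsplit by auto using l2_proj.
    apply functional_extensionality; intro k; apply (f_equal (fun s => s k)) in Hsplit.
    unfold reduced_rhs; rewrite HI.
    unfold seq_add, seq_scal, Mop, proj, Gop in *; destruct (B k); [|ring].
    rewrite Hsplit; field; lra. }
  unfold Gop_inverse; rewrite Hrhs, HI.
  destruct (Minv_inv _ (supported_proj B v Hv)) as [_ [_ ->]].
  symmetry; apply proj_split.
Qed.

Lemma Gop_inverse_bound r1 r2 : 0 <= r1 -> 0 <= r2 ->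
  (forall x, supported_on B x -> l2norm (Minv x) <= r1 * l2norm x) ->
  (forall x, supported_on (fun k => negb (B k)) x -> l2norm (Mop K Kadj B x) <= r2 * l2norm x) ->
  forall v, l2 v -> l2norm (Gop_inverse v) <= (r1 * (/ gamma + r2) + 1) * l2norm v.
Proof.
  intros Hr1 Hr2 HMinv HMop v Hv.
  set (I := fun k => negb (B k)).
  pose proof (reduced_rhs_supported v Hv) as Hy.
  assert (Hinv : 0 < / gamma) by now apply Rinv_0_lt_compat.
  assert (Hrhs : l2norm (reduced_rhs v) <= (/ gamma + r2) * l2norm v).
  { unfold reduced_rhs; fold I.
    eapply Rle_trans;
      [apply l2norm_triangle; apply l2_scal;
         [now apply l2_proj | exact (proj1 (Mop_supported B _))]|].
    rewrite !l2norm_scal, (Rabs_pos_eq (/ gamma)), (Rabs_left (-1)) by lra.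
    pose proof (l2norm_proj_le B v Hv); pose proof (l2norm_proj_le I v Hv).
    pose proof (HMop _ (supported_proj I v Hv)); nra. }
  unfold Gop_inverse; fold I.
  eapply Rle_trans; [apply l2norm_triangle; [apply Minv_inv, Hy | now apply l2_proj]|].
  pose proof (HMinv _ Hy); pose proof (l2norm_proj_le I v Hv); nra.
Qed.

Section FiniteActiveSet.

Variable S : list nat.
Hypothesis B_listed : forall k, In k S <-> B k = true.

Lemma Minv_opnorm_finite : exists r, opnorm (supported_on B) Minv = Finite r /\
  0 <= r /\ forall x, supported_on B x -> l2norm (Minv x) <= r * l2norm x.
Proof.
  assert (Mop_plus_on : forall x y, supported_on B x -> supported_on B y ->
    Mop K Kadj B (seq_add x y) = seq_add (Mop K Kadj B x) (Mop K Kadj B y))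
    by (intros x y [Hx _] [Hy _]; now apply Mop_plus).
  assert (Mop_scal_on : forall a x, supported_on B x ->
    Mop K Kadj B (seq_scal a x) = seq_scal a (Mop K Kadj B x))
    by (intros a x [Hx _]; now apply Mop_scal).
  destruct (linear_bounded_on_list B Minv (fun x Hx => proj1 (proj1 (Minv_inv x Hx)))
    (inverse_plus _ _ _ Mop_plus_on Minv_inv) (inverse_scal _ _ _ Mop_scal_on Minv_inv) S
    (fun k => proj1 (B_listed k))) as [C [HC HCb]].
  apply (opnorm_finite _ _ C); auto using supported_scal, supported_seq0.
  - now intros x [Hx _].
  - exact (inverse_scal _ _ _ Mop_scal_on Minv_inv).
  - intros x Hx; apply HCb; auto; intros k Hk; apply (proj2 Hx).
    destruct (B k) eqn:Bk; auto; exfalso; now apply Hk, B_listed.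
Qed.

Lemma Gop_inverse_bounded : exists C, forall v, l2 v -> l2norm (Gop_inverse v) <= C * l2norm v.
Proof.
  destruct Minv_opnorm_finite as [r1 [_ [Hr1 HMinv]]].
  destruct (Mop_opnorm_finite B (fun k => negb (B k))) as [r2 [_ [Hr2 HMop]]].
  exists (r1 * (/ gamma + r2) + 1); now apply Gop_inverse_bound.
Qed.

Lemma Gop_inverse_opnorm_le :
  Rbar_le (opnorm l2 Gop_inverse)
    (Rbar_plus
       (Rbar_mult (opnorm (supported_on B) Minv)
          (Rbar_plus (Finite (/ gamma))
             (opnorm (supported_on (fun k => negb (B k))) (Mop K Kadj B))))
       (Finite 1)).
Proof.
  destruct Minv_opnorm_finite as [r1 [-> [Hr1 HMinv]]].
  destruct (Mop_opnorm_finite B (fun k => negb (B k))) as [r2 [-> [Hr2 HMop]]].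
  apply (opnorm_le _ _ (r1 * (/ gamma + r2) + 1)).
  - assert (0 < / gamma) by now apply Rinv_0_lt_compat. nra.
  - now apply Gop_inverse_bound.
Qed.

End FiniteActiveSet.

End BackSubstitution.

End Gram.

Lemma active_set_listed {H : CompleteNormedModule R_AbsRing}
  (K : seqR -> H) (Kadj : H -> seqR) (f : H) (w : seqR) (w0 gamma : R) (u : seqR) :
  (forall y, l2 (Kadj y)) -> 0 < w0 -> (forall k, w0 <= w k) -> 0 < gamma -> l2 u ->
  exists S, forall k, In k S <-> active_set K Kadj f w gamma u k = true.
Proof.
  intros Kadj_l2 Hw0 Hw Hgamma Hu.
  set (s := seq_add u (seq_scal (- gamma) (Kadj (minus (K u) f)))).
  assert (Hs : l2 s) by (apply l2_add, l2_scal; auto).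
  destruct (l2_eventually_small s (gamma * w0) Hs ltac:(nra)) as [N HN].
  apply (eventually_false_listed _ N); intros k Hk; specialize (HN k Hk).
  unfold active_set; destruct Rlt_dec as [Hlt|]; auto; exfalso.
  replace (u k - gamma * Kadj (minus (K u) f) k) with (s k) in Hlt
    by (unfold s, seq_add, seq_scal; ring).
  specialize (Hw k); nra.
Qed.

Theorem proposition3p11
  (H : CompleteNormedModule R_AbsRing) (ip : H -> H -> R)
  (K : seqR -> H) (Kadj : H -> seqR) (f : H) (w : seqR) (w0 gamma : R)
  (u : seqR) :
  is_inner_product H ip ->
  (forall x y, l2 x -> l2 y -> K (seq_add x y) = plus (K x) (K y)) ->
  (forall (a : R) x, l2 x -> K (seq_scal a x) = scal a (K x)) ->
  (exists C, forall x, l2 x -> norm (K x) <= C * l2norm x) ->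
  (forall x y, l2 x -> l2 y -> K x = K y -> x = y) ->
  (forall y, l2 (Kadj y)) ->
  (forall x y, l2 x -> ip (K x) y = l2inner x (Kadj y)) ->
  0 < w0 -> (forall k, w0 <= w k) -> 0 < gamma ->
  l2 u ->
  let A := active_set K Kadj f w gamma u in
  let I := fun k => negb (A k) in
  (exists MinvAA : seqR -> seqR,
     forall x, supported_on A x ->
       supported_on A (MinvAA x) /\ Mop K Kadj A (MinvAA x) = x /\
       MinvAA (Mop K Kadj A x) = x) /\
  (exists Ginv : seqR -> seqR,
     (forall v, l2 v ->
        l2 (Ginv v) /\ Gop K Kadj A gamma (Ginv v) = v /\
        Ginv (Gop K Kadj A gamma v) = v) /\
     (exists C, forall v, l2 v -> l2norm (Ginv v) <= C * l2norm v) /\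
     forall MinvAA : seqR -> seqR,
       (forall x, supported_on A x ->
          supported_on A (MinvAA x) /\ Mop K Kadj A (MinvAA x) = x /\
          MinvAA (Mop K Kadj A x) = x) ->
       Rbar_le (opnorm l2 Ginv)
         (Rbar_plus
            (Rbar_mult (opnorm (supported_on A) MinvAA)
               (Rbar_plus (Finite (/ gamma))
                  (opnorm (supported_on I) (Mop K Kadj A))))
            (Finite 1))).
Proof.
  intros Hip K_plus K_scal [CK K_bounded] K_inj Kadj_l2 K_adjoint Hw0 Hw Hgamma Hu A I.
  destruct (active_set_listed K Kadj f w w0 gamma u Kadj_l2 Hw0 Hw Hgamma Hu) as [S HS].
  destruct (Mop_inverse_exists ip K Kadj Hip K_plus K_scal K_inj Kadj_l2 K_adjoint A S HS)
    as [Minv HMinv].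
  split; [now exists Minv|].
  exists (Gop_inverse K Kadj A gamma Minv); split; [|split].
  - intros v Hv; split; [|split].
    + exact (Gop_inverse_l2 K Kadj Kadj_l2 A gamma Minv HMinv v Hv).
    + exact (Gop_Gop_inverse ip K Kadj Hip K_plus Kadj_l2 K_adjoint A gamma Minv Hgamma HMinv v Hv).
    + exact (Gop_inverse_Gop ip K Kadj Hip K_plus K_adjoint A gamma Minv Hgamma HMinv v Hv).
  - exact (Gop_inverse_bounded ip K Kadj Hip K_plus K_scal Kadj_l2 K_adjoint CK K_bounded
             A gamma Minv Hgamma HMinv S HS).
  - intros Minv' HMinv'.
    rewrite (opnorm_ext l2 _ (Gop_inverse K Kadj A gamma Minv')).
    + exact (Gop_inverse_opnorm_le ip K Kadj Hip K_plus K_scal Kadj_l2 K_adjoint CK K_bounded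
               A gamma Minv' Hgamma HMinv' S HS).
    + intros v Hv; unfold Gop_inverse; f_equal.
      apply (inverse_unique_on _ _ _ HMinv' Minv _ HMinv), reduced_rhs_supported; auto.
Qed.
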